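(* A countably infinite disconnected graph $G$ is ME-homogeneous if and only if $G\cong I_\omega[K_\omega]$ or $G\cong I_\omega[K_n]$ for some positive integer $n$.
   Context: All graphs are undirected and loopless; subgraphs are induced. A monomorphism is an injective map sending adjacent vertices to adjacent vertices. $G$ is ME-homogeneous if every monomorphism between finite induced subgraphs of $G$ is the restriction of a surjective endomorphism of $G$. $K_\kappa$ is the complete graph and $I_\kappa$ the edgeless graph on $\kappa$ vertices; the lexicographic product $G[H]$ has vertex set $G\times H$ with $(g,h)\sim(g',h')$ iff $g\sim g'$, or $g=g'$ and $h\sim h'$. Thus $I_\omega[K_m]$ is a disjoint union of countably many copies of $K_m$. *)

From Stdlib Require Import List Relations.
Import ListNotations.

Definition is_graph {V : Type} (adj : V -> V -> Prop) : Prop :=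
  (forall x y, adj x y -> adj y x) /\ (forall x, ~ adj x x).

Definition bijective_map {A B : Type} (f : A -> B) : Prop :=
  (forall x y, f x = f y -> x = y) /\ (forall y, exists x, f x = y).

Definition countably_infinite (V : Type) : Prop :=
  exists f : nat -> V, bijective_map f.

Definition disconnected {V : Type} (adj : V -> V -> Prop) : Prop :=
  exists u v : V, ~ clos_refl_trans V adj u v.

Definition graph_iso {V W : Type} (R : V -> V -> Prop) (S : W -> W -> Prop) : Prop :=
  exists phi : V -> W, bijective_map phi /\ (forall x y, R x y <-> S (phi x) (phi y)).

(* ME-homogeneity: finite induced subgraphs are given by (finite) lists of
   vertices A, B; a monomorphism A -> B is represented by a map f : V -> V
   (only its values on A matter) that sends A into B, is injective on A and
   sends adjacent vertices of A to adjacent vertices. *)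
Definition ME_homogeneous {V : Type} (adj : V -> V -> Prop) : Prop :=
  forall (A B : list V) (f : V -> V),
    (forall x, In x A -> In (f x) B) ->
    (forall x y, In x A -> In y A -> f x = f y -> x = y) ->
    (forall x y, In x A -> In y A -> adj x y -> adj (f x) (f y)) ->
    exists g : V -> V,
      (forall x y, adj x y -> adj (g x) (g y)) /\
      (forall y, exists x, g x = y) /\
      (forall x, In x A -> g x = f x).

Definition edgeless (T : Type) : T -> T -> Prop := fun _ _ => False.
Definition complete (T : Type) : T -> T -> Prop := fun x y => x <> y.
Definition lex_product {A B : Type} (RA : A -> A -> Prop) (RB : B -> B -> Prop)
  : A * B -> A * B -> Prop :=
  fun p q => RA (fst p) (fst q) \/ (fst p = fst q /\ RB (snd p) (snd q)).

Definition fin_n (n : nat) : Type := { k : nat | k < n }.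

From Stdlib Require Import List Relations Arith Lia Classical ClassicalEpsilon.
Import ListNotations.

(* In an ME-homogeneous graph a surjective endomorphism extending a
   monomorphism maps components into components.  Sending a non-adjacent pair
   [x, y] of one component to [x] and a vertex of another component shows that
   components are cliques; extending [c |-> d] shows that every component
   injects into every other one, so all components have the same size; and if
   there were only finitely many components, one of them would be infinite and
   a transversal injected into it would extend to a surjection onto that single
   component.  Conversely, a monomorphism between finite subgraphs of
   [I_omega[K_kappa]] maps blocks to blocks and is injective on each block, so
   it extends block by block, the unused blocks being shifted onto all blocks. *)

(** * Counting subsets of [nat] *)

Definition infinite (P : nat -> Prop) : Prop := forall m, exists k, m <= k /\ P k.
Definition bounded (P : nat -> Prop) (N : nat) : Prop := forall k, P k -> k < N.
Definition injects (P Q : nat -> Prop) : Prop :=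
  exists h : nat -> nat,
    (forall x, P x -> Q (h x)) /\ (forall x y, P x -> P y -> h x = h y -> x = y).

Section Rank.
Variable P : nat -> Prop.

Definition holdsb (k : nat) : bool :=
  if excluded_middle_informative (P k) then true else false.

(* [rank P n] counts the elements of [P] below [n]; restricted to [P] it is the
   increasing enumeration of [P]. *)
Definition rank (n : nat) : nat := length (filter holdsb (seq 0 n)).

Lemma holdsb_true k : holdsb k = true <-> P k.
Proof.
  unfold holdsb; destruct (excluded_middle_informative (P k)); split; congruence.
Qed.

Lemma rank_S n : rank (S n) = rank n + (if holdsb n then 1 else 0).
Proof.
  unfold rank. rewrite seq_S, filter_app, length_app. simpl.
  destruct (holdsb n); simpl; lia.
Qed.

Lemma rank_le n m : n <= m -> rank n <= rank m.
Proof. induction 1; [lia|]. rewrite rank_S. lia. Qed.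

Lemma rank_S_in n : P n -> rank (S n) = S (rank n).
Proof. intro Hn. rewrite rank_S. apply holdsb_true in Hn. rewrite Hn. lia. Qed.

Lemma rank_lt a b : P a -> a < b -> rank a < rank b.
Proof. intros Ha Hab. pose proof (rank_le _ _ Hab). rewrite rank_S_in in H by exact Ha. lia. Qed.

Lemma rank_inj a b : P a -> P b -> rank a = rank b -> a = b.
Proof.
  intros Ha Hb E. destruct (lt_eq_lt_dec a b) as [[H|H]|H]; [|exact H|].
  - pose proof (rank_lt a b Ha H). lia.
  - pose proof (rank_lt b a Hb H). lia.
Qed.

Lemma rank_lt_bounded N k : bounded P N -> P k -> rank k < rank N.
Proof. intros HN Hk. exact (rank_lt k N Hk (HN k Hk)). Qed.

Lemma rank_lt_inv N j : j < rank N -> exists k, k < N /\ P k /\ rank k = j.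
Proof.
  induction N as [|N IH]; intro Hj; [unfold rank in Hj; simpl in Hj; lia|].
  rewrite rank_S in Hj. destruct (le_lt_dec (rank N) j) as [Hle|Hlt].
  - destruct (holdsb N) eqn:E; [|lia]. apply holdsb_true in E.
    exists N. repeat split; [lia|exact E|lia].
  - destruct (IH Hlt) as [k [Hk HPk]]. exists k. split; [lia|exact HPk].
Qed.

Lemma rank_unbounded : infinite P -> forall j, exists N, j < rank N.
Proof.
  intros Hinf j. induction j as [|j [N HN]].
  - destruct (Hinf 0) as [k [_ Hk]]. exists (S k). rewrite rank_S_in by exact Hk. lia.
  - destruct (Hinf N) as [k [Hk HPk]]. exists (S k). rewrite rank_S_in by exact HPk.
    pose proof (rank_le _ _ Hk). lia.
Qed.

Lemma rank_surj_infinite : infinite P -> forall j, exists k, P k /\ rank k = j.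
Proof.
  intros Hinf j. destruct (rank_unbounded Hinf j) as [N HN].
  destruct (rank_lt_inv N j HN) as [k [_ Hk]]. exists k. exact Hk.
Qed.

Lemma in_filter_holdsb N x : bounded P N -> In x (filter holdsb (seq 0 N)) <-> P x.
Proof.
  intro HN. rewrite filter_In, in_seq, holdsb_true.
  split; [tauto|]. intro Hx. specialize (HN x Hx). split; [lia|exact Hx].
Qed.

Lemma not_infinite_bounded : ~ infinite P -> exists N, bounded P N.
Proof.
  intro H. apply not_all_ex_not in H. destruct H as [m Hm].
  exists m. intros k Hk. destruct (le_lt_dec m k); [|assumption].
  exfalso. apply Hm. eauto.
Qed.

Lemma infinite_NoDup_list :
  infinite P -> forall n, exists l, NoDup l /\ length l = n /\ (forall x, In x l -> P x).
Proof.
  intros Hinf n.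
  assert (Hb : exists l b, NoDup l /\ length l = n /\ (forall x, In x l -> P x /\ x < b)).
  { induction n as [|n [l [b [Hnd [Hlen Hl]]]]].
    - exists [], 0. split; [constructor|]. split; [reflexivity|]. intros _ [].
    - destruct (Hinf b) as [k [Hk HPk]]. exists (k :: l), (S k). split; [|split].
      + constructor; [|exact Hnd]. intro Hin. apply Hl in Hin. lia.
      + simpl. lia.
      + intros y [<-|Hy]; [split; [exact HPk|lia]|].
        apply Hl in Hy. split; [tauto|lia]. }
  destruct Hb as [l [b [Hnd [Hlen Hl]]]]. exists l. split; [exact Hnd|]. split; [exact Hlen|].
  intros x Hx. apply Hl, Hx.
Qed.

End Rank.

Lemma rank_ext P Q n : (forall k, P k <-> Q k) -> rank P n = rank Q n.
Proof.
  intro HPQ. unfold rank. f_equal. apply filter_ext. intro k. unfold holdsb.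
  destruct (excluded_middle_informative (P k)), (excluded_middle_informative (Q k));
    try reflexivity; exfalso; firstorder.
Qed.

Lemma injects_NoDup_length P Q (l lQ : list nat) :
  injects P Q -> NoDup l -> (forall x, In x l -> P x) -> (forall k, Q k -> In k lQ) ->
  length l <= length lQ.
Proof.
  intros [h [HQ Hinj]] Hnd Hl HlQ. rewrite <- (length_map h l).
  apply NoDup_incl_length.
  - apply NoDup_map_NoDup_ForallPairs; [|exact Hnd].
    intros x y Hx Hy. apply Hinj; apply Hl; assumption.
  - intros y Hy. apply in_map_iff in Hy. destruct Hy as [x [<- Hx]].
    apply HlQ, HQ, Hl, Hx.
Qed.

Lemma infinite_not_injects_bounded P Q N : infinite P -> bounded Q N -> ~ injects P Q.
Proof.
  intros Hinf HN Hinj.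
  destruct (infinite_NoDup_list P Hinf (S N)) as [l [Hnd [Hlen Hl]]].
  pose proof (injects_NoDup_length P Q l (seq 0 N) Hinj Hnd Hl) as Hle.
  rewrite length_seq in Hle.
  enough (length l <= N) by lia.
  apply Hle. intros k Hk. apply in_seq. specialize (HN k Hk). lia.
Qed.

Lemma injects_rank_le P Q NP NQ :
  bounded P NP -> bounded Q NQ -> injects P Q -> rank P NP <= rank Q NQ.
Proof.
  intros HP HQ Hinj. apply (injects_NoDup_length P Q _ _ Hinj).
  - apply NoDup_filter, seq_NoDup.
  - intros x. apply in_filter_holdsb, HP.
  - intros k. apply in_filter_holdsb, HQ.
Qed.

(* Finitely many sets covering [nat]: drop the last one if it is bounded and
   shift the others past its bound. *)
Lemma finite_cover_has_infinite (C : nat -> nat -> Prop) m :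
  (forall k, exists j, j < m /\ C j k) -> exists j, j < m /\ infinite (C j).
Proof.
  revert C; induction m as [|m IH]; intros C Hcov.
  - destruct (Hcov 0) as [j [Hj _]]. lia.
  - destruct (classic (infinite (C m))) as [Hinf|Hfin]; [eauto|].
    destruct (not_infinite_bounded _ Hfin) as [N HN].
    destruct (IH (fun j k => C j (N + k))) as [j [Hj Hinf]].
    + intro k. destruct (Hcov (N + k)) as [j [Hj HC]].
      destruct (Nat.eq_dec j m) as [->|Hne]; [specialize (HN _ HC); lia|].
      exists j. split; [lia|exact HC].
    + exists j. split; [lia|]. intro m'. destruct (Hinf m') as [k [Hk HC]].
      exists (N + k). split; [lia|exact HC].
Qed.

(** * ME-homogeneity of [I_omega[K_kappa]] *)

Notation disjoint_cliques K := (lex_product (edgeless nat) (complete K)).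

Definition transposition {K : Type} (a b z : K) : K :=
  if excluded_middle_informative (z = a) then b
  else if excluded_middle_informative (z = b) then a else z.

Lemma transposition_inj {K : Type} (a b x y : K) :
  transposition a b x = transposition a b y -> x = y.
Proof.
  unfold transposition.
  destruct (excluded_middle_informative (x = a)), (excluded_middle_informative (y = a));
  destruct (excluded_middle_informative (x = b)), (excluded_middle_informative (y = b));
  intros; subst; congruence.
Qed.

Lemma injective_extension {X K : Type} (L : list X) (d r : X -> K) :
  (forall x y, In x L -> In y L -> d x = d y -> x = y) ->
  (forall x y, In x L -> In y L -> r x = r y -> x = y) ->
  exists s : K -> K, (forall a b, s a = s b -> a = b) /\ (forall x, In x L -> s (d x) = r x).
Proof.
  induction L as [|x L IH]; intros Hd Hr.
  - exists (fun z => z). split; [tauto|]. intros x [].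
  - destruct IH as [s [Hs_inj Hs]].
    { intros; apply Hd; simpl; auto. }
    { intros; apply Hr; simpl; auto. }
    destruct (classic (In x L)) as [Hin|Hnin].
    { exists s. split; [exact Hs_inj|]. intros y [<-|Hy]; auto. }
    exists (fun z => transposition (s (d x)) (r x) (s z)). split.
    + intros a b E. apply transposition_inj in E. auto.
    + intros y [<-|Hy]; unfold transposition.
      * destruct (excluded_middle_informative (s (d x) = s (d x))); congruence.
      * rewrite (Hs y Hy).
        destruct (excluded_middle_informative (r y = s (d x))) as [E|Hne1].
        { rewrite <- Hs in E by exact Hy. apply Hs_inj, Hd in E; simpl; auto.
          subst; contradiction. }
        destruct (excluded_middle_informative (r y = r x)) as [E|Hne2]; [|reflexivity].
        apply Hr in E; simpl; auto. subst; contradiction.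
Qed.

Section DisjointCliques.
Variable K : Type.

Section Monomorphism.
Variables (A : list (nat * K)) (f : nat * K -> nat * K).
Hypothesis f_inj : forall x y, In x A -> In y A -> f x = f y -> x = y.
Hypothesis f_adj : forall x y, In x A -> In y A ->
  disjoint_cliques K x y -> disjoint_cliques K (f x) (f y).

Lemma mono_same_block a b : In a A -> In b A -> fst a = fst b -> fst (f a) = fst (f b).
Proof.
  intros Ha Hb E. destruct (classic (a = b)) as [<-|Hne]; [reflexivity|].
  assert (Hab : disjoint_cliques K a b).
  { right. split; [exact E|]. intro E2. apply Hne. destruct a, b; simpl in *; congruence. }
  destruct (f_adj a b Ha Hb Hab) as [[]|[E' _]]. exact E'.
Qed.

Lemma mono_on_block i : exists (j : nat) (s : K -> K), (forall u v, s u = s v -> u = v) /\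
  (forall a, In a A -> fst a = i -> f a = (j, s (snd a))).
Proof.
  set (L := filter (fun a => fst a =? i) A).
  assert (HL : forall a, In a L <-> In a A /\ fst a = i).
  { intro a. unfold L. rewrite filter_In, Nat.eqb_eq. tauto. }
  destruct (injective_extension L snd (fun a => snd (f a))) as [s [Hs_inj Hs]].
  - intros [n u] [n' u'] Hx Hy E. apply HL in Hx, Hy. simpl in *.
    f_equal; [destruct Hx, Hy; congruence|exact E].
  - intros x y Hx Hy E. apply HL in Hx as [Hx Ex], Hy as [Hy Ey]. apply f_inj; [exact Hx|exact Hy|].
    pose proof (mono_same_block x y Hx Hy ltac:(congruence)).
    destruct (f x), (f y); simpl in *; congruence.
  - destruct (classic (exists a, In a A /\ fst a = i)) as [[a0 [Ha0 E0]]|Hnone].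
    + exists (fst (f a0)), s. split; [exact Hs_inj|]. intros a Ha E.
      rewrite (Hs a) by (apply HL; auto).
      rewrite <- (mono_same_block a a0 Ha Ha0) by congruence.
      destruct (f a); reflexivity.
    + exists 0, s. split; [exact Hs_inj|]. intros a Ha E. exfalso. eauto.
Qed.

End Monomorphism.

Lemma ME_homogeneous_disjoint_cliques : ME_homogeneous (disjoint_cliques K).
Proof.
  intros A B f _ f_inj f_adj.
  destruct (choice _ (mono_on_block A f f_inj f_adj)) as [c Hc].
  destruct (choice _ Hc) as [s Hs].
  set (M := S (list_max (map fst A))).
  exists (fun p => if fst p <? M then (c (fst p), s (fst p) (snd p)) else (fst p - M, snd p)).
  split; [|split].
  - intros p q [[]|[E Hne]]. rewrite <- E. destruct (fst p <? M).
    + right. split; [reflexivity|]. intro E2. apply Hne. exact (proj1 (Hs _) _ _ E2).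
    + right. split; [reflexivity|exact Hne].
  - intros [j k]. exists (j + M, k). simpl.
    destruct (j + M <? M) eqn:E; [apply Nat.ltb_lt in E; lia|]. f_equal. lia.
  - intros x Hx. assert (Hlt : fst x <? M = true).
    { apply Nat.ltb_lt. unfold M. enough (fst x <= list_max (map fst A)) by lia.
      pose proof (proj1 (list_max_le (map fst A) _) (le_n _)) as Hmax.
      rewrite Forall_forall in Hmax. apply Hmax, in_map, Hx. }
    rewrite Hlt. symmetry. apply (proj2 (Hs _)); [exact Hx|reflexivity].
Qed.

End DisjointCliques.

Lemma bijective_map_inverse {A B : Type} (f : A -> B) :
  bijective_map f -> exists g : B -> A, (forall y, f (g y) = y) /\ (forall x, g (f x) = x).
Proof.
  intros [Hinj Hsurj]. destruct (choice _ Hsurj) as [g Hg].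
  exists g. split; [exact Hg|]. intro x. apply Hinj, Hg.
Qed.

Lemma graph_iso_sym {V W : Type} (R : V -> V -> Prop) (S : W -> W -> Prop) :
  graph_iso R S -> graph_iso S R.
Proof.
  intros [phi [Hphi HRS]]. destruct (bijective_map_inverse phi Hphi) as [psi [H1 H2]].
  exists psi. split; [split|].
  - intros x y E. rewrite <- (H1 x), <- (H1 y), E. reflexivity.
  - intro x. exists (phi x). apply H2.
  - intros x y. rewrite HRS, !H1. reflexivity.
Qed.

Lemma graph_iso_trans {U V W : Type} (R : U -> U -> Prop) (S : V -> V -> Prop)
  (T : W -> W -> Prop) : graph_iso R S -> graph_iso S T -> graph_iso R T.
Proof.
  intros [phi [[Hi1 Hs1] HRS]] [psi [[Hi2 Hs2] HST]].
  exists (fun x => psi (phi x)). split; [split|].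
  - intros x y E. apply Hi1, Hi2, E.
  - intro z. destruct (Hs2 z) as [y <-]. destruct (Hs1 y) as [x <-]. eauto.
  - intros x y. rewrite HRS, HST. reflexivity.
Qed.

Lemma clos_refl_trans_map {V W : Type} (R : V -> V -> Prop) (S : W -> W -> Prop) (g : V -> W) :
  (forall x y, R x y -> S (g x) (g y)) ->
  forall x y, clos_refl_trans V R x y -> clos_refl_trans W S (g x) (g y).
Proof.
  intros Hg x y H. induction H.
  - apply rt_step, Hg. assumption.
  - apply rt_refl.
  - eapply rt_trans; eassumption.
Qed.

Lemma is_graph_iso {V W : Type} (R : V -> V -> Prop) (S : W -> W -> Prop) :
  graph_iso R S -> is_graph S -> is_graph R.
Proof.
  intros [phi [_ HRS]] [Hsym Hirr]. split.
  - intros x y. rewrite !HRS. apply Hsym.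
  - intro x. rewrite HRS. apply Hirr.
Qed.

Lemma disconnected_iso {V W : Type} (R : V -> V -> Prop) (S : W -> W -> Prop) :
  graph_iso R S -> disconnected S -> disconnected R.
Proof.
  intros [phi [[_ Hsurj] HRS]] [u [v Huv]].
  destruct (Hsurj u) as [x <-]. destruct (Hsurj v) as [y <-].
  exists x, y. intro Hxy. apply Huv.
  apply (clos_refl_trans_map R S phi); [|exact Hxy]. intros a b. apply HRS.
Qed.

Lemma ME_homogeneous_iso {V W : Type} (R : V -> V -> Prop) (S : W -> W -> Prop) :
  graph_iso R S -> ME_homogeneous S -> ME_homogeneous R.
Proof.
  intros [phi [Hphi HRS]] HM A B f HB Hinj Hadj.
  destruct (bijective_map_inverse phi Hphi) as [psi [Hpsi1 Hpsi2]].
  destruct (HM (map phi A) (map phi B) (fun w => phi (f (psi w)))) as [g [Hg_adj [Hg_surj Hg_ext]]].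
  - intros w Hw. apply in_map_iff in Hw. destruct Hw as [x [<- Hx]].
    rewrite Hpsi2. apply in_map, HB, Hx.
  - intros w w' Hw Hw' E. apply in_map_iff in Hw, Hw'.
    destruct Hw as [x [<- Hx]], Hw' as [y [<- Hy]]. rewrite !Hpsi2 in E.
    apply (proj1 Hphi) in E. f_equal. auto.
  - intros w w' Hw Hw' E. apply in_map_iff in Hw, Hw'.
    destruct Hw as [x [<- Hx]], Hw' as [y [<- Hy]]. rewrite !Hpsi2.
    apply HRS, Hadj; [exact Hx|exact Hy|]. apply HRS, E.
  - exists (fun v => psi (g (phi v))). split; [|split].
    + intros x y H. apply HRS. rewrite !Hpsi1. apply Hg_adj, HRS, H.
    + intro y. destruct (Hg_surj (phi y)) as [w Hw]. exists (psi w). rewrite Hpsi1, Hw. apply Hpsi2.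
    + intros x Hx. rewrite Hg_ext by (apply in_map, Hx). rewrite !Hpsi2. reflexivity.
Qed.

(** * Components of ME-homogeneous graphs *)

Definition adj_or_eq {V : Type} (adj : V -> V -> Prop) (x y : V) : Prop := x = y \/ adj x y.

Section Components.
Context {V : Type} {adj : V -> V -> Prop}.
Hypothesis adj_graph : is_graph adj.
Hypothesis adj_ME : ME_homogeneous adj.

Lemma clos_refl_trans_sym x y : clos_refl_trans V adj x y -> clos_refl_trans V adj y x.
Proof.
  induction 1.
  - apply rt_step, (proj1 adj_graph). assumption.
  - apply rt_refl.
  - eapply rt_trans; eassumption.
Qed.

Lemma adj_or_eq_clos_refl_trans x y : adj_or_eq adj x y -> clos_refl_trans V adj x y.
Proof. intros [<-|H]; [apply rt_refl|apply rt_step, H]. Qed.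

Lemma components_are_cliques :
  disconnected adj -> forall x y, clos_refl_trans V adj x y -> adj_or_eq adj x y.
Proof.
  intros [u [v Huv]] x y Hxy. destruct (classic (adj_or_eq adj x y)) as [|Hn]; [assumption|].
  exfalso. destruct adj_graph as [_ Hirr].
  assert (Hz : exists z, ~ clos_refl_trans V adj x z).
  { destruct (classic (clos_refl_trans V adj x u)) as [Hxu|Hxu]; [|eauto].
    exists v. intro Hxv. apply Huv. eapply rt_trans; [apply clos_refl_trans_sym|]; eassumption. }
  destruct Hz as [z Hz].
  assert (Hzx : z <> x) by (intros ->; apply Hz, rt_refl).
  assert (Hyx : y <> x) by (intros ->; apply Hn; left; reflexivity).
  set (f := fun w => if excluded_middle_informative (w = x) then x else z).
  assert (Hfx : f x = x) by (unfold f; destruct (excluded_middle_informative (x = x)); congruence).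
  assert (Hfy : f y = z) by (unfold f; destruct (excluded_middle_informative (y = x)); congruence).
  destruct (adj_ME [x; y] [x; z] f) as [g [Hg_adj [_ Hg_ext]]].
  - intros w [<-|[<-|[]]]; [rewrite Hfx|rewrite Hfy]; simpl; auto.
  - intros a b [<-|[<-|[]]] [<-|[<-|[]]]; rewrite ?Hfx, ?Hfy; congruence.
  - intros a b [<-|[<-|[]]] [<-|[<-|[]]] Hab; exfalso;
      [eapply Hirr| apply Hn; right| apply Hn; right; apply (proj1 adj_graph) | eapply Hirr];
      eassumption.
  - apply Hz. rewrite <- Hfx, <- Hfy, <- !Hg_ext by (simpl; auto).
    exact (clos_refl_trans_map adj adj g Hg_adj x y Hxy).
Qed.

Hypothesis adj_cliques : forall x y, clos_refl_trans V adj x y -> adj_or_eq adj x y.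

Lemma adj_or_eq_sym x y : adj_or_eq adj x y -> adj_or_eq adj y x.
Proof. intros [<-|H]; [left; reflexivity|right; apply (proj1 adj_graph), H]. Qed.

Lemma adj_or_eq_trans x y z : adj_or_eq adj x y -> adj_or_eq adj y z -> adj_or_eq adj x z.
Proof.
  intros Hxy Hyz. apply adj_cliques.
  eapply rt_trans; apply adj_or_eq_clos_refl_trans; eassumption.
Qed.

Lemma adj_or_eq_endo (g : V -> V) x y :
  (forall x y, adj x y -> adj (g x) (g y)) -> adj_or_eq adj x y -> adj_or_eq adj (g x) (g y).
Proof.
  intros Hg Hxy. apply adj_cliques, (clos_refl_trans_map adj adj g Hg), adj_or_eq_clos_refl_trans, Hxy.
Qed.

Lemma adj_of_adj_or_eq x y : adj_or_eq adj x y -> x <> y -> adj x y.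
Proof. intros [E|H] Hne; [contradiction|exact H]. Qed.

(* Injective because adjacent vertices have adjacent, hence distinct, images. *)
Lemma component_injects (c d : V) : exists h : V -> V,
  (forall x, adj_or_eq adj c x -> adj_or_eq adj d (h x)) /\
  (forall x y, adj_or_eq adj c x -> adj_or_eq adj c y -> h x = h y -> x = y).
Proof.
  destruct (adj_ME [c] [d] (fun _ => d)) as [g [Hg_adj [_ Hg_ext]]].
  - intros x _. left. reflexivity.
  - intros x y [<-|[]] [<-|[]] _. reflexivity.
  - intros x y [<-|[]] [<-|[]] H. exfalso. exact (proj2 adj_graph _ H).
  - exists g. split.
    + intros x Hx. rewrite <- (Hg_ext c) by (left; reflexivity). apply adj_or_eq_endo; assumption.
    + intros x y Hx Hy E. destruct (classic (x = y)) as [|Hne]; [assumption|exfalso].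
      assert (Hxy : adj x y).
      { apply adj_of_adj_or_eq; [|exact Hne]. eapply adj_or_eq_trans; [apply adj_or_eq_sym|]; eassumption. }
      apply Hg_adj in Hxy. rewrite E in Hxy. exact (proj2 adj_graph _ Hxy).
Qed.

Lemma transversal_injects_connected (A : list V) (c : V) (f : V -> V) :
  (forall x, exists a, In a A /\ adj_or_eq adj a x) ->
  (forall a, In a A -> adj_or_eq adj c (f a)) ->
  (forall a b, In a A -> In b A -> f a = f b -> a = b) ->
  forall x, adj_or_eq adj c x.
Proof.
  intros Hcov Hc Hf x.
  destruct (adj_ME A (map f A) f) as [g [Hg_adj [Hg_surj Hg_ext]]].
  - intros a Ha. apply in_map, Ha.
  - exact Hf.
  - intros a b Ha Hb Hab. apply adj_of_adj_or_eq.
    + eapply adj_or_eq_trans; [apply adj_or_eq_sym|]; apply Hc; assumption.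
    + intro E. apply Hf in E; [|assumption|assumption]. subst. exact (proj2 adj_graph _ Hab).
  - destruct (Hg_surj x) as [v <-]. destruct (Hcov v) as [a [Ha Hav]].
    apply (adj_or_eq_trans _ (f a)); [apply Hc, Ha|].
    rewrite <- (Hg_ext a Ha). apply adj_or_eq_endo; assumption.
Qed.

End Components.

Lemma iso_disjoint_cliques_of_coordinates {V K : Type} (adj : V -> V -> Prop)
  (comp : V -> nat) (pos : V -> K) :
  is_graph adj ->
  (forall x y, comp x = comp y <-> adj_or_eq adj x y) ->
  (forall x y, adj_or_eq adj x y -> pos x = pos y -> x = y) ->
  (forall i p, exists x, comp x = i /\ pos x = p) ->
  graph_iso adj (disjoint_cliques K).
Proof.
  intros [_ Hirr] Hcomp Hpos Hsurj. exists (fun x => (comp x, pos x)). split; [split|].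
  - intros x y E. injection E as E1 E2. apply Hpos; [apply Hcomp|]; assumption.
  - intros [i p]. destruct (Hsurj i p) as [x [<- <-]]. eauto.
  - intros x y. split.
    + intro H. right. simpl. split; [apply Hcomp; right; exact H|].
      intro E. apply Hpos in E; [|right; exact H]. subst. exact (Hirr _ H).
    + intros [[]|[E1 E2]]. simpl in *. apply Hcomp in E1.
      destruct E1 as [<-|H]; [contradiction|exact H].
Qed.

Section NatGraph.
Variable adj : nat -> nat -> Prop.
Hypothesis adj_graph : is_graph adj.
Hypothesis adj_ME : ME_homogeneous adj.
Hypothesis adj_disconnected : disconnected adj.
Hypothesis adj_cliques : forall x y, clos_refl_trans nat adj x y -> adj_or_eq adj x y.

Local Notation component_sym := (adj_or_eq_sym adj_graph).
Local Notation component_trans := (adj_or_eq_trans adj_cliques).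

Definition component_min (k : nat) : Prop := forall j, j < k -> ~ adj_or_eq adj j k.

Lemma component_min_exists k : exists j, component_min j /\ adj_or_eq adj j k.
Proof.
  induction k as [k IH] using lt_wf_ind.
  destruct (classic (component_min k)) as [Hk|Hk].
  - exists k. split; [exact Hk|left; reflexivity].
  - apply not_all_ex_not in Hk. destruct Hk as [j Hj].
    apply imply_to_and in Hj. destruct Hj as [Hjk Hj]. apply NNPP in Hj.
    destruct (IH j Hjk) as [i [Hi Hij]]. exists i. split; [exact Hi|].
    eapply component_trans; eassumption.
Qed.

Lemma component_min_unique j j' :
  component_min j -> component_min j' -> adj_or_eq adj j j' -> j = j'.
Proof.
  intros Hj Hj' E. destruct (lt_eq_lt_dec j j') as [[H|H]|H]; [exfalso| |exfalso].
  - exact (Hj' j H E).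
  - exact H.
  - exact (Hj j' H (component_sym _ _ E)).
Qed.

Lemma infinite_component_min : infinite component_min.
Proof.
  destruct adj_disconnected as [u [v Huv]]. apply NNPP. intro Hfin.
  destruct (not_infinite_bounded _ Hfin) as [m Hm].
  assert (Hcov : forall k, exists j, j < m /\ adj_or_eq adj j k).
  { intro k. destruct (component_min_exists k) as [j [Hj Hjk]]. exists j. split; [apply Hm|]; assumption. }
  destruct (finite_cover_has_infinite _ m Hcov) as [c [_ Hc]].
  destruct (infinite_NoDup_list _ Hc m) as [l [Hnd [Hlen Hl]]].
  assert (Hall : forall x, adj_or_eq adj c x).
  { apply (transversal_injects_connected adj_graph adj_ME adj_cliques
             (seq 0 m) c (fun i => nth i l 0)).
    - intro x. destruct (Hcov x) as [j [Hj Hjx]]. exists j. split; [apply in_seq; lia|exact Hjx].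
    - intros a Ha. apply in_seq in Ha. apply Hl, nth_In. lia.
    - intros a b Ha Hb. apply in_seq in Ha, Hb. apply (proj1 (NoDup_nth l 0) Hnd); lia. }
  apply Huv, adj_or_eq_clos_refl_trans.
  eapply component_trans; [apply component_sym|]; auto.
Qed.

Lemma component_numbering :
  exists comp : nat -> nat, (forall x y, comp x = comp y <-> adj_or_eq adj x y) /\
    (forall i, exists x, comp x = i).
Proof.
  destruct (choice _ component_min_exists) as [r Hr].
  exists (fun x => rank component_min (r x)). split.
  - intros x y. split.
    + intro E. apply rank_inj in E; [|apply Hr|apply Hr].
      apply (component_trans _ (r x)); [apply component_sym, Hr|]. rewrite E. apply Hr.
    + intro E. f_equal. apply component_min_unique; [apply Hr|apply Hr|].
      apply (component_trans _ x); [apply Hr|]. apply (component_trans _ y); [exact E|].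
      apply component_sym, Hr.
  - intro i. destruct (rank_surj_infinite _ infinite_component_min i) as [j [Hj <-]].
    exists j. f_equal. apply component_min_unique; [apply Hr|exact Hj|]. apply Hr.
Qed.

Definition position (x : nat) : nat := rank (adj_or_eq adj x) x.

Lemma position_in_component j x : adj_or_eq adj j x -> position x = rank (adj_or_eq adj j) x.
Proof.
  intro Hjx. apply rank_ext. intro k. split; intro H.
  - eapply component_trans; eassumption.
  - eapply component_trans; [apply component_sym|]; eassumption.
Qed.

Lemma position_inj x y : adj_or_eq adj x y -> position x = position y -> x = y.
Proof.
  intros Hxy E. rewrite (position_in_component x y Hxy) in E.
  apply rank_inj in E; [exact E|left; reflexivity|exact Hxy].
Qed.

Lemma iso_of_positions (K : Type) (pos : nat -> K) :
  (forall x y, adj_or_eq adj x y -> pos x = pos y -> x = y) ->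
  (forall j p, exists x, adj_or_eq adj j x /\ pos x = p) ->
  graph_iso adj (disjoint_cliques K).
Proof.
  intros Hpos Hsurj. destruct component_numbering as [comp [Hcomp Hcomp_surj]].
  apply (iso_disjoint_cliques_of_coordinates adj comp pos adj_graph Hcomp Hpos).
  intros i p. destruct (Hcomp_surj i) as [j <-]. destruct (Hsurj j p) as [x [Hjx <-]].
  exists x. split; [apply Hcomp, component_sym|]; auto.
Qed.

Lemma iso_of_infinite_components :
  (forall j, infinite (adj_or_eq adj j)) -> graph_iso adj (disjoint_cliques nat).
Proof.
  intros Hinf. apply (iso_of_positions nat position position_inj).
  intros j p. destruct (rank_surj_infinite _ (Hinf j) p) as [x [Hjx <-]].
  exists x. split; [exact Hjx|]. apply position_in_component, Hjx.
Qed.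

Lemma iso_of_finite_components n :
  (forall j, exists N, bounded (adj_or_eq adj j) N /\ rank (adj_or_eq adj j) N = n) ->
  graph_iso adj (disjoint_cliques (fin_n n)).
Proof.
  intros Hsize.
  assert (Hlt : forall x, position x < n).
  { intro x. destruct (Hsize x) as [N [HN <-]]. apply rank_lt_bounded; [exact HN|left; reflexivity]. }
  apply (iso_of_positions _ (fun x => exist _ (position x) (Hlt x))).
  - intros x y Hxy E. apply position_inj; [exact Hxy|]. exact (f_equal (@proj1_sig _ _) E).
  - intros j [p Hp]. destruct (Hsize j) as [N [_ HN]].
    assert (Hp' : p < rank (adj_or_eq adj j) N) by (rewrite HN; exact Hp).
    destruct (rank_lt_inv _ _ _ Hp') as [x [_ [Hjx Hx]]].
    exists x. split; [exact Hjx|].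
    assert (E : position x = p) by (rewrite (position_in_component j x Hjx); exact Hx).
    generalize (Hlt x). rewrite E. intro Hx'. f_equal. apply le_unique.
Qed.

End NatGraph.

Lemma classification_nat (adj : nat -> nat -> Prop) :
  is_graph adj -> ME_homogeneous adj -> disconnected adj ->
  graph_iso adj (disjoint_cliques nat) \/
  exists n : nat, 0 < n /\ graph_iso adj (disjoint_cliques (fin_n n)).
Proof.
  intros Hg HM Hdisc.
  pose proof (components_are_cliques Hg HM Hdisc) as Hcl.
  assert (Hinj : forall c d, injects (adj_or_eq adj c) (adj_or_eq adj d))
    by (intros c d; exact (component_injects Hg HM Hcl c d)).
  destruct (classic (infinite (adj_or_eq adj 0))) as [Hinf|Hfin].
  - left. apply (iso_of_infinite_components adj Hg HM Hdisc Hcl). intro j.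
    apply NNPP. intro Hj. destruct (not_infinite_bounded _ Hj) as [N HN].
    exact (infinite_not_injects_bounded _ _ _ Hinf HN (Hinj 0 j)).
  - destruct (not_infinite_bounded _ Hfin) as [N0 HN0].
    right. exists (rank (adj_or_eq adj 0) N0). split.
    + apply (rank_lt_bounded _ _ 0 HN0). left. reflexivity.
    + apply (iso_of_finite_components adj Hg HM Hdisc Hcl). intro j.
      destruct (not_infinite_bounded (adj_or_eq adj j)) as [N HN].
      { intro Hj. exact (infinite_not_injects_bounded _ _ _ Hj HN0 (Hinj j 0)). }
      exists N. split; [exact HN|].
      pose proof (injects_rank_le _ _ _ _ HN HN0 (Hinj j 0)).
      pose proof (injects_rank_le _ _ _ _ HN0 HN (Hinj 0 j)). lia.
Qed.

Theorem proposition8p4 (V : Type) (adj : V -> V -> Prop) :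
  is_graph adj -> countably_infinite V -> disconnected adj ->
  (ME_homogeneous adj <->
     (graph_iso adj (lex_product (edgeless nat) (complete nat)) \/
      exists n : nat, 0 < n /\ graph_iso adj (lex_product (edgeless nat) (complete (fin_n n))))).
Proof.
  intros Hg [e He] Hdisc.
  set (adjN := fun i j => adj (e i) (e j)).
  assert (Hiso : graph_iso adjN adj) by (exists e; split; [exact He|reflexivity]).
  split.
  - intro HM.
    destruct (classification_nat adjN (is_graph_iso _ _ Hiso Hg) (ME_homogeneous_iso _ _ Hiso HM)
                (disconnected_iso _ _ Hiso Hdisc)) as [HW|[n [Hn HW]]].
    + left. exact (graph_iso_trans _ _ _ (graph_iso_sym _ _ Hiso) HW).
    + right. exists n. split; [exact Hn|]. exact (graph_iso_trans _ _ _ (graph_iso_sym _ _ Hiso) HW).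
  - intros [HW|[n [_ HW]]].
    + exact (ME_homogeneous_iso _ _ HW (ME_homogeneous_disjoint_cliques nat)).
    + exact (ME_homogeneous_iso _ _ HW (ME_homogeneous_disjoint_cliques (fin_n n))).
Qed.
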